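(* For all positive integers $n$ and $k$ with $k\geq 2$, and every function $\sigma\colon E(K_{4n})\to\{-1,1\}$ with $\left|\sigma\left(E(K_{4n})\right)\right|< n(n-1)+k(6n-1)+k^2$, there is a perfect matching $M$ in $K_{4n}$ with $|\sigma(M)|\leq 2k-2$.
   Context: $K_{4n}$ denotes the complete graph on $4n$ vertices and $E(K_{4n})$ its edge set. For a set $F$ of edges, $\sigma(F)=\sum_{e\in F}\sigma(e)$. *)

From mathcomp Require Import all_boot all_order all_algebra.
Set Implicit Arguments. Unset Strict Implicit. Unset Printing Implicit Defensive.
Import Order.TTheory GRing.Theory Num.Theory.

Definition edges (m : nat) : {set {set 'I_m}} := [set e : {set 'I_m} | #|e| == 2].

Definition perfect_matching (m : nat) (M : {set {set 'I_m}}) : Prop :=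
  M \subset edges m /\
  (forall e f, e \in M -> f \in M -> e != f -> [disjoint e & f]) /\
  (forall v : 'I_m, exists2 e, e \in M & v \in e).

Definition sigma_sum (m : nat) (sigma : {set 'I_m} -> int) (F : {set {set 'I_m}}) : int :=
  \sum_(e in F) sigma e.

From mathcomp Require Import all_boot all_order all_algebra.
Import Order.TTheory GRing.Theory Num.Theory.
Local Open Scope ring_scope.
From mathcomp Require Import zify ring.
From Stdlib Require Import Classical.

(* A perfect matching is encoded by its partner map, a fixed-point-free
   involution p, and its weight  sum_v s v (p v) = 2 sigma(M).  If k > n any
   matching works, since |sigma(M)| <= 2n.  Otherwise assume all matchings
   have |weight| >= 4k - 3.  The elementary "rematching" move changes the
   weight by at most 8 and connects any two matchings, so all weights have
   the same sign; replacing sigma by -sigma, all are >= 4k - 3, i.e. every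
   matching has at most m = n - k negative edges.  Counting the negative
   edges of K_{4n} through a matching p of minimum weight (its negative
   edges, the "heavy" negative vertices with two negative edges to positive
   vertices, and their partners) shows that there are at most
   2m(4n) - m(m+1) of them (counted from both ends), which forces
   |sigma(E(K_{4n}))| >= n(n-1) + k(6n-1) + k^2, a contradiction. *)

Set Implicit Arguments. Unset Strict Implicit. Unset Printing Implicit Defensive.

Section Sums.
Variable T : finType.

Lemma card_sep (A : {set T}) (P : pred T) : #|[set x in A | P x]| = (\sum_(x in A) P x)%N.
Proof.
rewrite -sum1_card [LHS]big_mkcond [RHS]big_mkcond; apply: eq_bigr => x _.
by rewrite in_set; case: (x \in A); case: (P x).
Qed.

Lemma sum_mem (A B : {set T}) :
  B \subset A -> (\sum_(x in A) (x \in B))%N = #|B|.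
Proof.
move=> BA; rewrite -card_sep; apply: eq_card => x; rewrite in_set.
by apply/andb_idl => /(subsetP BA).
Qed.

Lemma sum_split4 (F : T -> int) a b c d :
  a != b -> a != c -> a != d -> b != c -> b != d -> c != d ->
  \sum_v F v = F a + F b + F c + F d +
     \sum_(v | [&& v != a, v != b, v != c & v != d]) F v.
Proof.
move=> ab ac ad bc bd cd.
rewrite (bigD1 a) // (bigD1 b) /= 1?eq_sym // (bigD1 c) /= 1?(eq_sym c) 1?(eq_sym c b) ?ac ?bc //.
rewrite (bigD1 d) /= 1?(eq_sym d) 1?(eq_sym d b) 1?(eq_sym d c) ?ad ?bd ?cd //.
by rewrite !addrA; congr (_ + _); apply: eq_bigl => v; rewrite -!andbA.
Qed.

End Sums.

Lemma sum_two_to_one (X Y : finType) (A : {set X}) (h : X -> Y) (F : Y -> int) :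
  (forall y, y \in h @: A -> #|[set x in A | h x == y]| = 2%N) ->
  \sum_(x in A) F (h x) = 2 * \sum_(y in h @: A) F y.
Proof.
move=> fibre2; rewrite (partition_big_imset h) /= mulr_sumr; apply: eq_bigr => y y_img.
transitivity (\sum_(x in [set x in A | h x == y]) F y).
  by apply: eq_big => [x|x /andP [_ /eqP ->]] //; rewrite in_set.
by rewrite sumr_const fibre2 // mulr_natl.
Qed.

Section Rematching.
Variable T : finType.

(* A perfect matching of the complete graph on T, seen as the map sending
   each vertex to its partner: a fixed-point-free involution. *)
Definition fpf_involution (p : T -> T) := forall v, p (p v) = v /\ p v != v.

Section Involution.
Variable p : T -> T.
Hypothesis p_inv : fpf_involution p.

Lemma fpf_invK v : p (p v) = v. Proof. exact: (p_inv v).1. Qed.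
Lemma fpf_neq v : p v != v. Proof. exact: (p_inv v).2. Qed.
Lemma fpf_inj : injective p.
Proof. by move=> u v e; rewrite -[u]fpf_invK e fpf_invK. Qed.
Lemma fpf_eq u v : (p u == p v) = (u == v).
Proof. exact: (inj_eq fpf_inj). Qed.

(* A set of vertices closed under the matching is a union of matching
   edges, hence has even size. *)
Lemma fpf_closed_even (A : {set T}) :
  (forall v, (p v \in A) = (v \in A)) -> exists t, #|A| = (2 * t)%N.
Proof.
move=> A_closed; set X := [set x in A | (enum_rank x < enum_rank (p x))%N].
exists #|X|.
have X_sub : X \subset A by apply/subsetP => x; rewrite in_set => /andP [].
have X_pX : X :&: p @: X = set0.
  apply/setP => x; rewrite in_setI in_set0; apply/negP => /andP [x_X /imsetP [y y_X e]].
  by move: x_X y_X; rewrite !in_set e fpf_invK => /andP [_ lt1] /andP [_ lt2]; lia.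
have -> : A = X :|: p @: X.
  apply/setP => x; rewrite in_setU; apply/idP/idP => [x_A|].
    case: (ltngtP (enum_rank x) (enum_rank (p x))) => [lt|gt|/val_inj/enum_rank_inj eq].
    - by rewrite in_set x_A lt.
    - apply/orP; right; apply/imsetP; exists (p x); last by rewrite fpf_invK.
      by rewrite in_set A_closed x_A fpf_invK gt.
    - by move: (fpf_neq x); rewrite -eq eqxx.
  by case/orP => [/(subsetP X_sub)|/imsetP [y /(subsetP X_sub) y_A ->]] //; rewrite A_closed.
by rewrite cardsU X_pX cards0 (card_imset _ fpf_inj); lia.
Qed.

End Involution.

(* Replace the two matching edges {a, p a} and {b, p b} by {a, b} and
   {p a, p b}; this elementary move connects any two perfect matchings. *)
Definition rematch (p : T -> T) (a b : T) : T -> T := fun v =>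
  if v == a then b else if v == b then a else if v == p a then p b
  else if v == p b then p a else p v.

Section RematchFacts.
Variables (p : T -> T) (a b : T).
Hypotheses (p_inv : fpf_involution p) (a_neq_b : a != b) (b_neq_pa : b != p a).
Let p_invK := fpf_invK p_inv.
Let p_neq := fpf_neq p_inv.
Let p_eq := fpf_eq p_inv.

Lemma rematch_distinct :
  [/\ a != p a, a != p b, b != p b, p a != p b & p a != b].
Proof.
split; rewrite 1?eq_sym ?p_neq ?p_eq 1?[b == a]eq_sym //.
by apply: contra b_neq_pa => /eqP <-; rewrite p_invK.
Qed.

Lemma rematch_a : rematch p a b a = b. Proof. by rewrite /rematch eqxx. Qed.

Lemma rematch_b : rematch p a b b = a.
Proof. by rewrite /rematch eq_sym (negbTE a_neq_b) eqxx. Qed.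

Lemma rematch_pa : rematch p a b (p a) = p b.
Proof.
have [apa _ _ _ pab] := rematch_distinct.
by rewrite /rematch eq_sym (negbTE apa) (negbTE pab) eqxx.
Qed.

Lemma rematch_pb : rematch p a b (p b) = p a.
Proof.
have [_ apb bpb papb _] := rematch_distinct.
by rewrite /rematch eq_sym (negbTE apb) eq_sym (negbTE bpb) eq_sym (negbTE papb) eqxx.
Qed.

Lemma rematch_other v :
  v != a -> v != b -> v != p a -> v != p b -> rematch p a b v = p v.
Proof.
by move=> va vb vpa vpb; rewrite /rematch (negbTE va) (negbTE vb) (negbTE vpa) (negbTE vpb).
Qed.

Lemma rematch_fpf : fpf_involution (rematch p a b).
Proof.
have [apa apb bpb papb pab] := rematch_distinct.
move=> v; case: (eqVneq v a) => [->|va].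
  by rewrite rematch_a rematch_b eq_sym.
case: (eqVneq v b) => [->|vb]; first by rewrite rematch_b rematch_a.
case: (eqVneq v (p a)) => [->|vpa].
  by rewrite rematch_pa rematch_pb eq_sym.
case: (eqVneq v (p b)) => [->|vpb]; first by rewrite rematch_pb rematch_pa.
have pva : p v != a by apply: contra vpa => /eqP <-; rewrite p_invK.
have pvb : p v != b by apply: contra vpb => /eqP <-; rewrite p_invK.
by rewrite !rematch_other ?p_eq // p_invK p_neq.
Qed.

End RematchFacts.

Lemma rematch_disagree (p q : T -> T) v :
  fpf_involution p -> fpf_involution q -> p v != q v ->
  (#|[set w | rematch p v (q v) w != q w]| < #|[set w | p w != q w]|)%N.
Proof.
move=> p_inv q_inv pq_v.
have [p_invK q_invK] := (fpf_invK p_inv, fpf_invK q_inv).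
rewrite [X in (_ < X)%N](cardsD1 v) in_set pq_v ltnS subset_leq_card //.
apply/subsetP => w; rewrite !inE => rem_w.
case: (eqVneq w v) => [w_v|w_v] /=; first by rewrite w_v rematch_a eqxx in rem_w.
apply: contra rem_w => /eqP pq_w.
rewrite rematch_other ?pq_w //.
- apply: contra pq_v => /eqP w_qv.
  have pw_v : p w = v by rewrite pq_w w_qv q_invK.
  by rewrite -w_qv -{1}pw_v p_invK.
- apply: contra pq_v => /eqP w_pv.
  have qw_v : q w = v by rewrite -pq_w w_pv p_invK.
  by rewrite -w_pv -qw_v q_invK.
- apply: contra w_v => /eqP w_pqv.
  by rewrite -(fpf_eq q_inv) -pq_w w_pqv p_invK.
Qed.

End Rematching.

Section Weight.
Variable T : finType.
Variable s : T -> T -> int.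
Hypothesis s_sym : forall u v, s u v = s v u.
Hypothesis s_pm1 : forall u v, u != v -> s u v = 1 \/ s u v = -1.

(* The weight of the matching p counts each of its edges twice. *)
Definition weight (p : T -> T) : int := \sum_v s v (p v).

Lemma s_bound u v : u != v -> -1 <= s u v <= 1.
Proof. by move=> uv; have [->|->] := s_pm1 uv. Qed.

Lemma weight_rematch p a b : fpf_involution p -> a != b -> b != p a ->
  weight (rematch p a b) =
  weight p - 2 * s a (p a) - 2 * s b (p b) + 2 * s a b + 2 * s (p a) (p b).
Proof.
move=> p_inv ab bpa; have [apa apb bpb papb pab] := rematch_distinct p_inv ab bpa.
rewrite /weight !(sum_split4 _ ab apa apb bpa bpb papb).
rewrite rematch_a (rematch_b _ ab) (rematch_pa p_inv ab bpa) (rematch_pb p_inv ab bpa).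
rewrite !(fpf_invK p_inv).
rewrite (eq_bigr (fun v => s v (p v))); last first.
  by move=> v /and4P [va vb vpa vpb]; rewrite rematch_other.
rewrite (s_sym b a) (s_sym (p b) (p a)) (s_sym (p a) a) (s_sym (p b) b).
ring.
Qed.

Lemma weight_rematch_ge p a b : fpf_involution p -> a != b -> b != p a ->
  weight p - 8 <= weight (rematch p a b).
Proof.
move=> p_inv ab bpa; have [apa _ bpb papb _] := rematch_distinct p_inv ab bpa.
rewrite weight_rematch //.
move: (s_bound apa) (s_bound bpb) (s_bound ab) (s_bound papb); lia.
Qed.

Lemma weight_norm_le p : fpf_involution p -> `|weight p| <= #|T|%:Z.
Proof.
move=> p_inv; apply: le_trans (ler_norm_sum _ _ _) _.
rewrite -[#|T|]sum1_card -natz natr_sum; apply: ler_sum => v _.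
have v_pv : v != p v by rewrite eq_sym (fpf_neq p_inv).
by have [->|->] := s_pm1 v_pv.
Qed.

Lemma exists_min_weight (p0 : T -> T) : fpf_involution p0 ->
  exists2 p, fpf_involution p & forall q, fpf_involution q -> weight p <= weight q.
Proof.
move=> p0_inv.
pose fpfb (f : {ffun T -> T}) := [forall v, (f (f v) == v) && (f v != v)].
have fpfbP (q : T -> T) : fpf_involution q -> fpfb (finfun q).
  by move=> q_inv; apply/forallP => v; rewrite !ffunE fpf_invK ?fpf_neq ?eqxx.
have [f /forallP f_inv f_min] := arg_minP (fun f : {ffun T -> T} => weight f) (fpfbP _ p0_inv).
exists f => [v|q q_inv]; first by have /andP [/eqP -> ->] := f_inv v.
have := f_min _ (fpfbP _ q_inv); rewrite /weight.
by under [X in _ <= X]eq_bigr do rewrite ffunE.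
Qed.

(* A rematching moves the weight by at most 8, so when no matching has
   weight in the gap (-c, c) with c >= 5, all matchings lie on one side. *)
Lemma weight_sign_constant (c : int) (p q : T -> T) : 5 <= c ->
  (forall r, fpf_involution r -> c <= `|weight r|) ->
  fpf_involution p -> fpf_involution q -> c <= weight p -> c <= weight q.
Proof.
move=> c_ge5 far p_inv q_inv.
have [K] := ubnP #|[set w | p w != q w]|; elim: K p p_inv => // K IH p p_inv.
rewrite ltnS => diff_le p_pos.
case: (pickP (fun v => p v != q v)) => [v /= pq_v | agree]; last first.
  suff -> : weight q = weight p by [].
  by apply: eq_bigr => w _; have /negbFE/eqP -> := agree w.
have v_qv : v != q v by rewrite eq_sym (fpf_neq q_inv).
have qv_pv : q v != p v by rewrite eq_sym.
have r_inv := rematch_fpf p_inv v_qv qv_pv.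
apply: (IH _ r_inv).
  exact: leq_trans (rematch_disagree p_inv q_inv pq_v) diff_le.
have := far _ r_inv; have := weight_rematch_ge p_inv v_qv qv_pv.
rewrite ler_normr; lia.
Qed.

Definition neg_adj u v := s u v == -1.
Definition neg_deg u := #|[set v | (v != u) && neg_adj u v]|.

Lemma neg_adjC u v : neg_adj u v = neg_adj v u.
Proof. by rewrite /neg_adj s_sym. Qed.

Section MinimumWeight.
Variable p : T -> T.
Hypothesis p_inv : fpf_involution p.
Hypothesis p_min : forall q, fpf_involution q -> weight p <= weight q.
Let p_invK := fpf_invK p_inv.
Let p_eq := fpf_eq p_inv.

Definition plus := [set v | s v (p v) == 1].
Definition minus := ~: plus.

Definition plus_nbrs x := [set u in plus | neg_adj x u].
Definition plus_deg x := #|plus_nbrs x|.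

Lemma plus_nbrsP x u : reflect (u \in plus /\ neg_adj x u) (u \in plus_nbrs x).
Proof. by rewrite /plus_nbrs in_set; apply: andP. Qed.

Lemma plus_edge u : u \in plus -> s u (p u) = 1.
Proof. by rewrite inE => /eqP. Qed.

Lemma minus_edge x : x \in minus -> s x (p x) = -1.
Proof.
rewrite in_setC inE => x_minus; have x_px : x != p x by rewrite eq_sym fpf_neq.
by have [x_pos|//] := s_pm1 x_px; rewrite x_pos eqxx in x_minus.
Qed.

Lemma partner_plus u : (p u \in plus) = (u \in plus).
Proof. by rewrite !inE p_invK s_sym. Qed.

Lemma partner_minus u : (p u \in minus) = (u \in minus).
Proof. by rewrite !in_setC partner_plus. Qed.

Lemma plus_minus_neq u x : u \in plus -> x \in minus -> u != x.
Proof. by move=> u_plus; apply: contraL => /eqP <-; rewrite in_setC u_plus. Qed.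

Lemma plus_minus_partner_neq u x : u \in plus -> x \in minus -> u != p x.
Proof. by move=> u_plus x_minus; rewrite plus_minus_neq ?partner_minus. Qed.

Lemma no_weight_drop q : fpf_involution q -> weight q = weight p - 4 -> False.
Proof. by move=> q_inv q_weight; have := p_min q_inv; rewrite q_weight; lia. Qed.

Lemma plus_clique u w : u \in plus -> w \in plus -> u != w -> s u w = 1.
Proof.
move=> u_plus w_plus uw; case: (eqVneq w (p u)) => [->|w_pu]; first exact: plus_edge.
have := p_min (rematch_fpf p_inv uw w_pu).
rewrite weight_rematch // (plus_edge u_plus) (plus_edge w_plus).
have : p u != p w by rewrite p_eq.
by move=> /s_pm1 [->|->]; have [->|->] := s_pm1 uw; lia.
Qed.

(* If a negative vertex x has a negative edge to a positive vertex w, then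
   the partner of x is positively joined to every other positive vertex u:
   otherwise rematching {x, p x}, {w, p w} and then {p x, p w}, {u, p u}
   lowers the weight by 4. *)
Lemma minus_partner_pos x w u :
  x \in minus -> w \in plus_nbrs x -> u \in plus -> u != w -> s (p x) u = 1.
Proof.
move=> x_minus /plus_nbrsP [w_plus /eqP xw_neg] u_plus u_w.
have px_u : p x != u by rewrite eq_sym plus_minus_partner_neq.
have [//|px_u_neg] := s_pm1 px_u; exfalso.
have x_w : x != w by rewrite eq_sym plus_minus_neq.
have w_px : w != p x by rewrite plus_minus_partner_neq.
have r_inv := rematch_fpf p_inv x_w w_px.
have r_weight := weight_rematch p_inv x_w w_px.
rewrite (minus_edge x_minus) (plus_edge w_plus) xw_neg in r_weight.
case: (eqVneq u (p w)) => [u_pw | u_pw].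
  by apply: (no_weight_drop r_inv); rewrite r_weight -u_pw px_u_neg; ring.
have r_px : rematch p x w (p x) = p w by rewrite (rematch_pa p_inv x_w w_px).
have r_u : rematch p x w u = p u.
  have u_x := plus_minus_neq u_plus x_minus.
  by apply: rematch_other; rewrite // eq_sym.
have u_rpx : u != rematch p x w (p x) by rewrite r_px.
have pw_pu : s (p w) (p u) = 1.
  by apply: plus_clique; rewrite ?partner_plus ?p_eq 1?eq_sym.
apply: (no_weight_drop (rematch_fpf r_inv px_u u_rpx)).
by rewrite weight_rematch // r_px r_u r_weight (plus_edge u_plus) px_u_neg pw_pu; ring.
Qed.

Lemma weight_plus_minus : weight p = #|plus|%:Z - #|minus|%:Z.
Proof.
rewrite /weight (bigID (mem plus)) /=.
rewrite (eq_bigr (fun=> 1)); last by move=> v; apply: plus_edge.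
have -> : \sum_(x | x \notin plus) s x (p x) = \sum_(x in minus) (-1 : int).
  by rewrite (eq_bigl (mem minus)) => [|x]; [apply: eq_bigr => x; apply: minus_edge | rewrite /= in_setC].
by rewrite !sumr_const mulNrn !natz.
Qed.

(* Counting negative edges: every such edge meets a negative vertex. *)
Section Counting.
Local Open Scope nat_scope.

Definition minus_deg x := #|[set v in minus | (v != x) && neg_adj x v]|.

Lemma neg_deg_plus u : u \in plus -> neg_deg u = #|[set x in minus | neg_adj u x]|.
Proof.
move=> u_plus; apply: eq_card => v; rewrite [LHS]in_set [RHS]in_set.
case: (boolP (v \in minus)) => v_minus /=; first by rewrite eq_sym plus_minus_neq.
case: (eqVneq v u) => //= vu.
have v_plus : v \in plus by move: v_minus; rewrite in_setC negbK.
by rewrite /neg_adj plus_clique 1?eq_sym.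
Qed.

Lemma neg_deg_minus x : x \in minus -> neg_deg x = plus_deg x + minus_deg x.
Proof.
move=> x_minus; rewrite /neg_deg -(cardsID plus); congr (_ + _).
  apply: eq_card => v; rewrite in_setI in_set [in RHS]in_set.
  case: (boolP (v \in plus)) => v_plus /=; last by rewrite andbF.
  by rewrite andbT plus_minus_neq.
by apply: eq_card => v; rewrite in_setD in_set [in RHS]in_set in_setC andbC.
Qed.

(* Each negative plus-minus edge is counted once at each end. *)
Lemma neg_deg_sum_split :
  \sum_u neg_deg u = 2 * \sum_(x in minus) plus_deg x + \sum_(x in minus) minus_deg x.
Proof.
have plus_sum : \sum_(u in plus) neg_deg u = \sum_(x in minus) plus_deg x.
  rewrite (eq_bigr (fun u => \sum_(x in minus) neg_adj u x)); last first.
    by move=> u u_plus; rewrite neg_deg_plus // card_sep.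
  rewrite exchange_big; apply: eq_bigr => x _.
  by rewrite /plus_deg /plus_nbrs card_sep; apply: eq_bigr => u _; rewrite neg_adjC.
rewrite (bigID (mem plus)) /= plus_sum.
have -> : \sum_(x | x \notin plus) neg_deg x = \sum_(x in minus) neg_deg x.
  by apply: eq_bigl => x; rewrite in_setC.
rewrite (eq_bigr _ neg_deg_minus) big_split /=; lia.
Qed.

End Counting.

End MinimumWeight.

Section HeavyVertices.
Variable p : T -> T.
Hypothesis p_inv : fpf_involution p.
Hypothesis p_min : forall q, fpf_involution q -> weight p <= weight q.

Definition heavy := [set x in minus p | (1 < plus_deg p x)%N].
Definition heavy_partners := p @: heavy.

Lemma heavyP x : reflect (x \in minus p /\ (1 < plus_deg p x)%N) (x \in heavy).
Proof. by rewrite /heavy in_set; apply: andP. Qed.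

Lemma heavy_nbr x u : x \in heavy -> exists2 w, w \in plus_nbrs p x & w != u.
Proof.
case/heavyP => _ deg_x; have : (0 < #|plus_nbrs p x :\ u|)%N.
  by move: deg_x; rewrite /plus_deg (cardsD1 u); case: (u \in plus_nbrs p x) => /=; lia.
by case/card_gt0P => w; rewrite in_setD1 => /andP [wu w_nbr]; exists w.
Qed.

Lemma heavy_partner_plus x u : x \in heavy -> u \in plus p -> s (p x) u = 1.
Proof.
move=> x_heavy u_plus; have [x_minus _] := heavyP _ x_heavy.
have [w w_nbr w_u] := heavy_nbr u x_heavy.
by apply: (minus_partner_pos p_inv p_min x_minus w_nbr); rewrite // eq_sym.
Qed.

(* Take negative edges x1 u1, x2 u2 to positive vertices, u1 != u2.
   Rematching {x1, p x1}, {u1, p u1} into {x1, u1}, {p x1, p u1} keeps the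
   weight minimal; in the new matching x2 is still negative with the
   negative edge x2 u2, and p x1 is positive, so minus_partner_pos applies. *)
Lemma heavy_partners_pos x1 x2 :
  x1 \in heavy -> x2 \in heavy -> x1 != x2 -> s (p x1) (p x2) = 1.
Proof.
move=> x1_heavy x2_heavy x12.
have [[x1_minus _] [x2_minus _]] := (heavyP _ x1_heavy, heavyP _ x2_heavy).
have [u1 u1_nbr _] := heavy_nbr x1 x1_heavy.
have [u2 u2_nbr u21] := heavy_nbr u1 x2_heavy.
move/plus_nbrsP: (u1_nbr) => [u1_plus /eqP x1u1_neg].
move/plus_nbrsP: (u2_nbr) => [u2_plus x2u2_neg].
have pu1_plus : p u1 \in plus p by rewrite (partner_plus p_inv).
have y1_pu1 : s (p x1) (p u1) = 1 := heavy_partner_plus x1_heavy pu1_plus.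
have x1_u1 : x1 != u1 by rewrite eq_sym (plus_minus_neq u1_plus x1_minus).
have u1_y1 : u1 != p x1 := plus_minus_partner_neq p_inv u1_plus x1_minus.
set r := rematch p x1 u1.
have r_inv : fpf_involution r := rematch_fpf p_inv x1_u1 u1_y1.
have r_min q : fpf_involution q -> weight r <= weight q.
  have -> : weight r = weight p.
    rewrite weight_rematch // (minus_edge p_inv x1_minus) (plus_edge u1_plus).
    by rewrite x1u1_neg y1_pu1; ring.
  exact: p_min.
have r_y1 : r (p x1) = p u1 by rewrite /r (rematch_pa p_inv x1_u1 u1_y1).
have r_x2 : r x2 = p x2.
  have x2_u1 := plus_minus_neq u1_plus x2_minus.
  have x2_pu1 : x2 != p u1 by rewrite eq_sym (plus_minus_neq pu1_plus x2_minus).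
  have x2_y1 : x2 != p x1.
    apply/eqP => x2_y1; have := heavy_partner_plus x2_heavy u1_plus.
    by rewrite x2_y1 (fpf_invK p_inv) x1u1_neg.
  by rewrite /r rematch_other // 1?eq_sym.
have x2_minus_r : x2 \in minus r by rewrite !inE r_x2 (minus_edge p_inv x2_minus).
have y1_plus_r : p x1 \in plus r by rewrite inE r_y1 y1_pu1.
have u2_nbr_r : u2 \in plus_nbrs r x2.
  apply/plus_nbrsP; split => //; rewrite inE.
  case: (eqVneq u2 (p u1)) => [->|u2_pu1].
    by rewrite /r (rematch_pb p_inv x1_u1 u1_y1) s_sym y1_pu1.
  have u2_x1 := plus_minus_neq u2_plus x1_minus.
  have u2_y1 := plus_minus_partner_neq p_inv u2_plus x1_minus.
  by rewrite /r rematch_other // (plus_edge u2_plus).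
have y1_u2 : p x1 != u2 by rewrite eq_sym (plus_minus_partner_neq p_inv u2_plus x1_minus).
have := minus_partner_pos r_inv r_min x2_minus_r u2_nbr_r y1_plus_r y1_u2.
by rewrite r_x2 s_sym.
Qed.

Section HeavyCounting.
Local Open Scope nat_scope.

Lemma heavy_sub : heavy \subset minus p.
Proof. by apply/subsetP => x /heavyP []. Qed.

Lemma heavy_partners_sub : heavy_partners \subset minus p.
Proof.
by apply/subsetP => _ /imsetP [x /heavyP [x_minus _] ->]; rewrite (partner_minus p_inv).
Qed.

Lemma card_heavy_partners : #|heavy_partners| = #|heavy|.
Proof. exact: card_imset (fpf_inj p_inv). Qed.

Lemma plus_deg_partner x : x \in heavy_partners -> plus_deg p x = 0.
Proof.
case/imsetP => h h_heavy ->; apply/eqP; rewrite cards_eq0; apply/eqP/setP => u.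
rewrite in_set0 /plus_nbrs in_set; apply/negbTE; rewrite negb_and.
by case: (boolP (u \in plus p)) => //= u_plus; rewrite /neg_adj heavy_partner_plus.
Qed.

Lemma heavy_partners_disjoint : [disjoint heavy & heavy_partners].
Proof.
apply/pred0P => x /=; apply/negbTE; apply/andP => -[/heavyP [_ deg_x] x_partner].
by rewrite plus_deg_partner in deg_x.
Qed.

Lemma card_heavy_union : #|heavy :|: heavy_partners| = 2 * #|heavy|.
Proof.
have := cardsUI heavy heavy_partners.
by rewrite (disjoint_setI0 heavy_partners_disjoint) cards0 addn0 card_heavy_partners addnn -mul2n.
Qed.

Lemma heavy_union_sub : heavy :|: heavy_partners \subset minus p.
Proof. by rewrite subUset heavy_sub heavy_partners_sub. Qed.

Lemma card_heavy_le : 2 * #|heavy| <= #|minus p|.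
Proof. by rewrite -card_heavy_union subset_leq_card // heavy_union_sub. Qed.

(* Heavy vertices have at most #|plus p| positive negative-neighbours, their
   partners none, and the remaining negative vertices at most one. *)
Lemma plus_deg_sum_bound :
  \sum_(x in minus p) plus_deg p x <= #|heavy| * #|plus p| + (#|minus p| - 2 * #|heavy|).
Proof.
set rest := minus p :\: (heavy :|: heavy_partners).
have card_rest : #|rest| = #|minus p| - 2 * #|heavy|.
  by rewrite cardsD (setIidPr heavy_union_sub) card_heavy_union.
apply: (@leq_trans (\sum_(x in minus p) ((x \in heavy) * #|plus p| + (x \in rest)))).
  apply: leq_sum => x x_minus; case: (boolP (x \in heavy)) => x_heavy /=.
    rewrite mul1n (leq_trans _ (leq_addr _ _)) // subset_leq_card //.
    by apply/subsetP => u; rewrite in_set => /andP [].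
  case: (boolP (x \in heavy_partners)) => x_partner; first by rewrite plus_deg_partner.
  have -> : x \in rest by rewrite in_setD in_setU x_minus (negbTE x_heavy) (negbTE x_partner).
  by move: x_heavy; rewrite /heavy in_set x_minus /= -leqNgt.
rewrite big_split /= -big_distrl /= !sum_mem ?heavy_sub ?subsetDl //.
by rewrite card_rest.
Qed.

(* Among negative vertices, the partners of heavy vertices are pairwise
   joined by positive edges. *)
Lemma minus_deg_sum_bound :
  \sum_(x in minus p) minus_deg p x + #|heavy| * (#|heavy| - 1) <= #|minus p| * (#|minus p| - 1).
Proof.
apply: (@leq_trans (\sum_(x in minus p) (minus_deg p x + (x \in heavy_partners) * (#|heavy| - 1)))).
  by rewrite big_split /= -big_distrl /= sum_mem ?heavy_partners_sub // card_heavy_partners.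
rewrite -sum_nat_const; apply: leq_sum => x x_minus.
set N := [set v in minus p | (v != x) && neg_adj x v].
have N_sub : N \subset minus p :\ x.
  by apply/subsetP => v; rewrite !inE => /andP [v_minus /andP [vx _]]; rewrite vx v_minus.
have card_minus_x : #|minus p :\ x| = #|minus p| - 1 by rewrite (cardsD1 x (minus p)) x_minus; lia.
case: (boolP (x \in heavy_partners)) => x_partner /=; last first.
  by rewrite mul0n addn0 /minus_deg -card_minus_x subset_leq_card.
rewrite mul1n -card_minus_x.
have card_partners_x : #|heavy_partners :\ x| = #|heavy| - 1.
  by rewrite -card_heavy_partners (cardsD1 x heavy_partners) x_partner /=; lia.
have N_partners : N :&: (heavy_partners :\ x) = set0.
  apply/setP => v; rewrite !inE; apply/negP.
  move=> /andP [/andP [_ /andP [vx x_v_neg]] /andP [_ v_partner]].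
  case/imsetP: x_partner => h1 h1_heavy e1; case/imsetP: v_partner => h2 h2_heavy e2.
  have h12 : h1 != h2 by apply: contra vx => /eqP e; rewrite e1 e2 e.
  by move: x_v_neg; rewrite /neg_adj e1 e2 heavy_partners_pos.
have := cardsUI N (heavy_partners :\ x).
rewrite N_partners cards0 addn0 /minus_deg -/N -card_partners_x => <-.
apply: subset_leq_card; rewrite subUset N_sub /=.
by apply/subsetP => v; rewrite !in_setD1 => /andP [-> v_partner]; rewrite (subsetP heavy_partners_sub).
Qed.

End HeavyCounting.

End HeavyVertices.

(* Twice the signed sum over all edges, computed from the negative degrees. *)
Definition total_weight : int := \sum_u \sum_(v | v != u) s u v.

Lemma row_sum u : \sum_(v | v != u) s u v = (#|T| - 1)%:Z - 2 * (neg_deg u)%:Z.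
Proof.
rewrite (eq_bigr (fun v => 1 - 2 * (neg_adj u v)%:Z)); last first.
  by move=> v vu; rewrite eq_sym in vu; rewrite /neg_adj; have [->|->] := s_pm1 vu.
have neg_count : \sum_(v | v != u) (neg_adj u v)%:Z = (neg_deg u)%:Z.
  rewrite /neg_deg -sum1dep_card big_mkcondr /= -natz natr_sum.
  by apply: eq_bigr => v _; case: (neg_adj u v).
rewrite sumrB sumr_const -mulr_sumr neg_count.
have -> : #|[pred v | v != u]| = (#|T| - 1)%N.
  by rewrite subn1 -(cardC1 u); apply: eq_card => v; rewrite !inE.
by congr (_ - _); apply: natz.
Qed.

Lemma total_weight_neg_deg :
  total_weight = (#|T| * (#|T| - 1))%N%:Z - 2 * (\sum_u neg_deg u)%:Z.
Proof.
rewrite /total_weight (eq_bigr _ (fun u _ => row_sum u)) sumrB sumr_const -mulr_sumr.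
have -> : \sum_u (neg_deg u)%:Z = (\sum_u neg_deg u)%N%:Z.
  by rewrite -natz natr_sum; apply: eq_bigr => u _; rewrite natz.
by rewrite pmulrn mulrzz mulrC PoszM.
Qed.

(* The final count of neg_deg_sum_bound, with a = #|heavy|, 2t = #|minus|,
   U = #|plus|, X and Y the sums of plus_deg and minus_deg over minus. *)
Lemma neg_count_arith (N m t a U X Y : nat) :
  (a <= t)%N -> (t <= m)%N -> (4 * m + 8 <= N)%N -> (U + 2 * t)%N = N ->
  (X <= a * U + (2 * t - 2 * a))%N -> (Y + a * (a - 1) <= 2 * t * (2 * t - 1))%N ->
  (2 * X + Y + m * (m + 1) <= 2 * m * N)%N.
Proof. move=> *; nia. Qed.

(* If every perfect matching has weight at least #|T| - (4m + 3), i.e. has at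
   most m negative edges, then the complete graph has few negative edges:
   count them through a minimum-weight matching. *)
Lemma neg_deg_sum_bound (m : nat) (p0 : T -> T) : fpf_involution p0 ->
  (4 * m + 8 <= #|T|)%N ->
  (forall q, fpf_involution q -> #|T|%:Z - (4 * m + 3)%N%:Z <= weight q) ->
  (\sum_u neg_deg u + m * (m + 1) <= 2 * m * #|T|)%N.
Proof.
move=> p0_inv T_large weight_large.
have [p p_inv p_min] := exists_min_weight p0_inv.
have [t card_minus] := fpf_closed_even p_inv (partner_minus p_inv).
have card_plus_minus : (#|plus p| + #|minus p|)%N = #|T| by rewrite cardsC.
have := weight_large p p_inv; rewrite weight_plus_minus // => weight_p.
rewrite (neg_deg_sum_split p_inv p_min).
have t_le_m : (t <= m)%N by lia.
have heavy_le_t : (#|heavy p| <= t)%N by have := card_heavy_le p_inv p_min; lia.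
apply: (neg_count_arith heavy_le_t t_le_m T_large (U := #|plus p|)).
- by rewrite -card_minus.
- by rewrite -card_minus (plus_deg_sum_bound p_inv p_min).
- by rewrite -card_minus (minus_deg_sum_bound p_inv p_min).
Qed.

End Weight.

Lemma weightN (T : finType) (s : T -> T -> int) p :
  weight (fun u v => - s u v) p = - weight s p.
Proof. by rewrite /weight sumrN. Qed.

Lemma total_weightN (T : finType) (s : T -> T -> int) :
  total_weight (fun u v => - s u v) = - total_weight s.
Proof. by rewrite /total_weight -sumrN; apply: eq_bigr => u _; rewrite sumrN. Qed.

(* The arithmetic of the final count, for #|T| = 4n and m = n - k. *)
Lemma threshold_bound (n k D : nat) : (0 < k <= n)%N ->
  (D + (n - k) * (n - k + 1) <= 2 * (n - k) * (4 * n))%N ->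
  2 * (n * (n - 1) + k * (6 * n - 1) + k ^ 2)%N%:Z <= (4 * n * (4 * n - 1))%N%:Z - 2 * D%:Z.
Proof.
case/andP => k_gt0 k_le_n; rewrite -lez_nat.
have n_gt0 : (0 < n)%N := leq_trans k_gt0 k_le_n.
by rewrite !(PoszD, PoszM) -!subzn ?(leq_trans n_gt0) ?leq_pmull // !PoszM; lia.
Qed.

Lemma total_weight_far (T : finType) (s : T -> T -> int) (n k : nat) (p0 : T -> T) :
  (forall u v, s u v = s v u) -> (forall u v, u != v -> s u v = 1 \/ s u v = -1) ->
  #|T| = (4 * n)%N -> (2 <= k <= n)%N -> fpf_involution p0 ->
  (forall q, fpf_involution q -> (4 * k - 3)%N%:Z <= `|weight s q|) ->
  2 * (n * (n - 1) + k * (6 * n - 1) + k ^ 2)%N%:Z <= `|total_weight s|.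
Proof.
move=> s_sym s_pm1 card_T /andP [k_ge2 k_le_n] p0_inv far.
have c_ge5 : 5 <= (4 * k - 3)%N%:Z by lia.
have one_sided (r : T -> T -> int) : (forall u v, r u v = r v u) ->
    (forall u v, u != v -> r u v = 1 \/ r u v = -1) ->
    (forall q, fpf_involution q -> (4 * k - 3)%N%:Z <= weight r q) ->
    2 * (n * (n - 1) + k * (6 * n - 1) + k ^ 2)%N%:Z <= total_weight r.
  move=> r_sym r_pm1 r_pos.
  have := neg_deg_sum_bound r_sym r_pm1 (m := n - k) p0_inv.
  rewrite total_weight_neg_deg // card_T => bound.
  apply: threshold_bound; first by rewrite (leq_trans _ k_ge2).
  by apply: bound => [|q /r_pos]; lia.
have [p0_pos|p0_neg] := lerP (4 * k - 3)%N%:Z (weight s p0).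
  apply: le_trans (ler_norm _); apply: one_sided => // q q_inv.
  exact: (weight_sign_constant s_sym s_pm1 c_ge5 far p0_inv q_inv p0_pos).
pose r u v := - s u v.
have r_sym u v : r u v = r v u by rewrite /r s_sym.
have r_pm1 u v : u != v -> r u v = 1 \/ r u v = -1.
  by move=> uv; rewrite /r; have [->|->] := s_pm1 u v uv; [right|left].
have r_far q : fpf_involution q -> (4 * k - 3)%N%:Z <= `|weight r q|.
  by move=> q_inv; rewrite weightN normrN far.
rewrite -normrN -total_weightN; apply: le_trans (ler_norm _); apply: one_sided => // q q_inv.
apply: (weight_sign_constant r_sym r_pm1 c_ge5 r_far p0_inv q_inv).
have := far p0 p0_inv; rewrite weightN; lia.
Qed.

Section CompleteGraph.
Variable N : nat.
Variable sigma : {set 'I_N} -> int.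
Hypothesis sigma_pm1 : forall e, e \in edges N -> sigma e = 1 \/ sigma e = -1.

Definition pair_sign (u v : 'I_N) := sigma [set u; v].

Lemma pair_sign_sym u v : pair_sign u v = pair_sign v u.
Proof. by rewrite /pair_sign setUC. Qed.

Lemma pair_sign_pm1 u v : u != v -> pair_sign u v = 1 \/ pair_sign u v = -1.
Proof. by move=> uv; apply: sigma_pm1; rewrite /edges in_set cards2 uv. Qed.

Definition matching_of (p : 'I_N -> 'I_N) := (fun v => [set v; p v]) @: [set: 'I_N].

Section Matching.
Variable p : 'I_N -> 'I_N.
Hypothesis p_inv : fpf_involution p.
Let p_invK := fpf_invK p_inv.
Let p_neq := fpf_neq p_inv.

Lemma pair_eq x v : ([set x; p x] == [set v; p v]) = (x == v) || (x == p v).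
Proof.
apply/eqP/orP => [e|[/eqP ->|/eqP ->]] //; last by rewrite p_invK setUC.
have : x \in [set v; p v] by rewrite -e set21.
by rewrite in_set2 => /orP.
Qed.

Lemma matching_of_perfect : perfect_matching (matching_of p).
Proof.
split; [|split].
- apply/subsetP => e /imsetP [v _ ->].
  by rewrite /edges in_set cards2 (eq_sym v) p_neq.
- move=> e f /imsetP [v _ ->] /imsetP [w _ ->] ef.
  rewrite -setI_eq0; apply/eqP/setP => z; rewrite in_setI in_set0.
  apply/negP => /andP [zv zw].
  have e_z : [set z; p z] == [set v; p v] by rewrite pair_eq -in_set2.
  have f_z : [set z; p z] == [set w; p w] by rewrite pair_eq -in_set2.
  by move: ef; rewrite -(eqP e_z) -(eqP f_z) eqxx.
- by move=> v; exists [set v; p v]; [apply/imsetP; exists v | rewrite set21].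
Qed.

Lemma matching_of_sum : 2 * sigma_sum sigma (matching_of p) = weight pair_sign p.
Proof.
rewrite /sigma_sum /weight -(sum_two_to_one (A := [set: 'I_N]) (h := fun v => [set v; p v])).
  by apply: eq_bigl => v; rewrite in_setT.
move=> _ /imsetP [v _ ->].
have -> : [set x in [set: 'I_N] | [set x; p x] == [set v; p v]] = [set v; p v].
  by apply/setP => x; rewrite in_set in_setT pair_eq in_set2.
by rewrite cards2 (eq_sym v) p_neq.
Qed.

End Matching.

Lemma ordered_pair_eq (a b x1 x2 : 'I_N) : b != a ->
  ((x2 != x1) && ([set x1; x2] == [set a; b])) =
  ((x1, x2) == (a, b)) || ((x1, x2) == (b, a)).
Proof.
move=> ba; apply/idP/idP.
  case/andP => ne /eqP e.
  have h1 : x1 \in [set a; b] by rewrite -e set21.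
  have h2 : x2 \in [set a; b] by rewrite -e set22.
  move: h1 h2 ne; rewrite !in_set2 !xpair_eqE.
  by case/orP => /eqP -> /orP [] /eqP ->; rewrite ?eqxx ?andbT ?orbT.
rewrite !xpair_eqE; case/orP => /andP [/eqP -> /eqP ->]; rewrite ?eqxx ?andbT //.
by rewrite (eq_sym a) ba setUC eqxx.
Qed.

(* Every edge is the image of exactly two ordered pairs. *)
Lemma edges_sum : 2 * sigma_sum sigma (edges N) = total_weight pair_sign.
Proof.
rewrite /total_weight pair_big_dep /=.
set A := [set z : 'I_N * 'I_N | z.2 != z.1].
pose h (z : 'I_N * 'I_N) := [set z.1; z.2].
have edges_img : edges N = h @: A.
  apply/setP => e; apply/idP/imsetP.
    by rewrite /edges in_set => /cards2P [x [y [xy ->]]]; exists (x, y); rewrite // in_set /= eq_sym.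
  by case=> z; rewrite in_set => zA ->; rewrite /edges in_set cards2 (eq_sym z.1) zA.
transitivity (\sum_(z in A) sigma (h z)); last by apply: eq_bigl => z; rewrite in_set.
rewrite (sum_two_to_one (h := h)) -?edges_img //.
move=> e; rewrite /edges in_set => /cards2P [a [b [ab ->]]].
have ba : b != a by rewrite eq_sym.
rewrite (_ : [set x in A | h x == [set a; b]] = [set (a, b); (b, a)]).
  by rewrite cards2 xpair_eqE eq_sym (negbTE ba).
by apply/setP => [[x1 x2]]; rewrite in_set in_set2 in_set /=; apply: ordered_pair_eq.
Qed.

End CompleteGraph.

(* On an even number of vertices, pair 2i with 2i + 1. *)
Definition flip (v : nat) := if odd v then v.-1 else v.+1.

Lemma flip_lt (N v : nat) : ~~ odd N -> (v < N)%N -> (flip v < N)%N.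
Proof.
rewrite /flip => N_even v_lt; case: (boolP (odd v)) => v_odd.
  exact: leq_ltn_trans (leq_pred v) v_lt.
rewrite ltn_neqAle v_lt andbT; apply: contraNneq N_even => <-.
by rewrite /= v_odd.
Qed.

Lemma exists_fpf_involution (N : nat) :
  ~~ odd N -> exists p : 'I_N -> 'I_N, fpf_involution p.
Proof.
move=> N_even; exists (fun v => Ordinal (flip_lt N_even (ltn_ord v))) => v; split.
  apply/val_inj; rewrite /= /flip; case: (boolP (odd v)) => v_odd /=.
    by case: (nat_of_ord v) v_odd => //= v' /negbTE ->.
  by rewrite v_odd.
apply/eqP => /(congr1 val) /=; rewrite /flip.
by case: (nat_of_ord v) => [|v'] //=; case: (odd v') => /=; lia.
Qed.

Theorem theorem3 (n k : nat) (sigma : {set 'I_(4 * n)} -> int) :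
  (0 < n)%N -> (2 <= k)%N ->
  (forall e, e \in edges (4 * n) -> sigma e = 1 \/ sigma e = -1) ->
  `|sigma_sum sigma (edges (4 * n))| <
    (n * (n - 1) + k * (6 * n - 1) + k ^ 2)%:Z ->
  exists M : {set {set 'I_(4 * n)}},
    perfect_matching M /\ `|sigma_sum sigma M| <= (2 * k - 2)%:Z.
Proof.
move=> n_gt0 k_ge2 sigma_pm1 small_total.
have s_sym := pair_sign_sym sigma.
have s_pm1 := pair_sign_pm1 sigma_pm1.
suff [p p_inv p_small] :
    exists2 p, fpf_involution p & `|weight (pair_sign sigma) p| <= (4 * k - 4)%N%:Z.
  exists (matching_of p); split; first exact: matching_of_perfect.
  by move: p_small; rewrite -(matching_of_sum sigma p_inv); lia.
have four_n_even : ~~ odd (4 * n) by rewrite oddM.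
have [p0 p0_inv] := exists_fpf_involution four_n_even.
have [n_lt_k|k_le_n] := ltnP n k.
  exists p0 => //; apply: le_trans (weight_norm_le s_pm1 p0_inv) _.
  by rewrite card_ord; lia.
apply: NNPP => no_small.
have far q : fpf_involution q -> (4 * k - 3)%N%:Z <= `|weight (pair_sign sigma) q|.
  move=> q_inv; rewrite leNgt; apply/negP => q_small.
  by apply: no_small; exists q => //; lia.
have := total_weight_far s_sym s_pm1 (card_ord _) _ p0_inv far.
by rewrite k_ge2 k_le_n -edges_sum normrM; move: small_total; lia.
Qed.
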